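(* Let $M$ be an equidecomposable magma, let $P$ be a polynomial over $M$ in $n$ variables, and let $k\in M$. Then the equation $P(x_1,\ldots,x_n)=k$ has at most one solution $(x_1,\ldots,x_n)\in M^n$.
   Context: A magma is a set with a binary operation $+$; it is equidecomposable if $x+y=x'+y'$ implies $x=x'$ and $y=y'$. A polynomial over $M$ in the $n$ variables $x_1,\ldots,x_n$ is given by a term $P$ of the free magma on the variable set, i.e. a fully parenthesized formal sum built from variables, in which the variables occurring are exactly $x_1,\ldots,x_n$; it defines the map $M^n\to M$ obtained by substituting elements of $M$ for the variables and evaluating with $+$ (recursively: a single variable gives the identity/projection, and if $P=Q+R$ then $P(\ldots)=Q(\ldots)+R(\ldots)$ with each summand evaluated on the variables occurring in it). *)

From mathcomp Require Import all_boot.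
Set Implicit Arguments. Unset Strict Implicit. Unset Printing Implicit Defensive.

Definition equidecomposable (M : Type) (add : M -> M -> M) : Prop :=
  forall x y x' y' : M, add x y = add x' y' -> x = x' /\ y = y'.

(* Terms of the free magma on a variable set V (fully parenthesized sums). *)
Inductive term (V : Type) : Type :=
| TVar : V -> term V
| TAdd : term V -> term V -> term V.

Fixpoint occurs (V : Type) (v : V) (t : term V) : Prop :=
  match t with
  | TVar w => w = v
  | TAdd t1 t2 => occurs v t1 \/ occurs v t2
  end.

Fixpoint eval_term (M : Type) (add : M -> M -> M) (V : Type) (x : V -> M)
    (t : term V) : M :=
  match t with
  | TVar v => x v
  | TAdd t1 t2 => add (eval_term add x t1) (eval_term add x t2)
  end.

(* A polynomial in the n variables x_1..x_n (indexed by 'I_n): a term over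
   'I_n in which every variable occurs. *)
Definition is_polynomial (n : nat) (P : term 'I_n) : Prop :=
  forall i : 'I_n, occurs i P.

From mathcomp Require Import all_boot.

Set Implicit Arguments. Unset Strict Implicit.

Section EquidecomposableMagma.

Variables (M : Type) (add : M -> M -> M).
Hypothesis add_equidecomposable : equidecomposable add.

Lemma eval_term_inj_occurs (V : Type) (t : term V) (x y : V -> M) :
  eval_term add x t = eval_term add y t -> forall v, occurs v t -> x v = y v.
Proof.
elim: t => [w | t1 IH1 t2 IH2] /= eq_xy v v_in_t; first by rewrite -v_in_t.
have [eq_t1 eq_t2] := add_equidecomposable eq_xy.
by case: v_in_t => [v_in_t1 | v_in_t2]; [exact: IH1 | exact: IH2].
Qed.

End EquidecomposableMagma.

Theorem proposition3p5 (M : Type) (add : M -> M -> M)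
    (Heq : equidecomposable add) (n : nat) (P : term 'I_n)
    (HP : is_polynomial P) (k : M) :
  forall x y : 'I_n -> M,
    eval_term add x P = k -> eval_term add y P = k ->
    forall i : 'I_n, x i = y i.
Proof.
move=> x y Px Py i.
exact: (eval_term_inj_occurs Heq (etrans Px (esym Py)) (HP i)).
Qed.
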